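(* Let $F$ be an indexed group with degree map $\deg: F\to\mathbb{Z}$, let $G$ be a group, let $H$ be a subgroup of $G$, and let $\Phi$ be a set of homomorphisms $F\to G$ with the following two properties. (I) $\Phi$ is invariant under conjugation by elements of $H$: if $h\in H$ and $\varphi\in\Phi$, then the homomorphism $\psi: f\mapsto h^{-1}\varphi(f)h$ lies in $\Phi$. (II) For any $\varphi\in\Phi$ and any $h$ in the $\varphi$-core $H_\varphi$ of $H$, the homomorphism $\psi: F\to G$ defined by $\psi(f)=\varphi(f)$ for all $f\in F$ with $\deg f=0$ and $\psi(f_1)=\varphi(f_1)h$ for some element $f_1\in F$ of degree one (equivalently, for all degree-one elements) belongs to $\Phi$. Then $|\Phi|$ is divisible by $|H|$.
   Context: An indexed group is a group $F$ equipped with a surjective homomorphism $\deg: F\to\mathbb{Z}$ (the degree). For $x,y$ in a group, $x^y=y^{-1}xy$, and for a subgroup $H$, $H^y=y^{-1}Hy$; $C(X)$ denotes the centraliser of a subset $X$. For a homomorphism $\varphi: F\to G$ from an indexed group and a subgroup $H\le G$, the $\varphi$-core of $H$ is $H_\varphi=\bigcap_{f\in F}H^{\varphi(f)}\cap C(\{\varphi(f)\mid \deg f=0\})$, i.e. the set of $h$ with $\varphi(f)h\varphi(f)^{-1}\in H$ for all $f\in F$... more precisely $h\in H^{\varphi(f)}$ for all $f$ and $h$ commuting with $\varphi(f)$ whenever $\deg f=0$. (For $h\in H_\varphi$ the map $\psi$ in (II) is a well-defined homomorphism.) Groups need not be finite; divisibility is understood in the sense of cardinal arithmetic: an infinite cardinal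 is divisible by every nonzero cardinal not exceeding it. *)

From Stdlib Require Import ZArith.

Record Group := {
  carrier :> Type;
  gmul : carrier -> carrier -> carrier;
  gone : carrier;
  ginv : carrier -> carrier;
  gmulA : forall x y z, gmul x (gmul y z) = gmul (gmul x y) z;
  gmul1 : forall x, gmul gone x = x;
  gmulV : forall x, gmul (ginv x) x = gone
}.

Arguments gmul {g}.
Arguments gone {g}.
Arguments ginv {g}.

Definition is_hom (F G : Group) (phi : F -> G) : Prop :=
  forall x y : F, phi (gmul x y) = gmul (phi x) (phi y).

Definition is_subgroup (G : Group) (H : G -> Prop) : Prop :=
  H gone /\ (forall x y, H x -> H y -> H (gmul x y)) /\ (forall x, H x -> H (ginv x)).

Definition is_degree (F : Group) (deg : F -> Z) : Prop :=
  (forall x y : F, deg (gmul x y) = (deg x + deg y)%Z) /\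
  (forall n : Z, exists f : F, deg f = n).

Definition conj {G : Group} (x y : G) : G := gmul (ginv y) (gmul x y).

(* h in H^y = y^-1 H y  iff  y h y^-1 in H *)
Definition in_conj_sub {G : Group} (H : G -> Prop) (y h : G) : Prop :=
  H (gmul y (gmul h (ginv y))).

Definition phi_core (F G : Group) (deg : F -> Z) (phi : F -> G) (H : G -> Prop)
  (h : G) : Prop :=
  (forall f : F, in_conj_sub H (phi f) h) /\
  (forall f : F, deg f = 0%Z -> gmul h (phi f) = gmul (phi f) h).

(* Cardinal divisibility |A| divides |B|: |B| = |A| * |M| for some cardinal,
   i.e. B is in bijection with A x M for some type M. *)
Definition card_divides (A B : Type) : Prop :=
  exists (M : Type) (e : A * M -> B),
    (forall u v, e u = e v -> u = v) /\ (forall b, exists u, e u = b).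

From Stdlib Require Import ZArith Lia.
From Stdlib Require Import ClassicalEpsilon FunctionalExtensionality PropExtensionality ProofIrrelevance.

(* Fix [f1] of degree one.  For [d] in the core [H_phi] there is exactly one
   homomorphism, the twist of [phi] by [d], that agrees with [phi] in degree
   zero and sends [f1] to [phi f1 * d]; twists and conjugations by [H] generate
   an equivalence relation whose classes lie in [Phi] by (I) and (II).  All
   twists of [phi] have the same core [H_phi], and a conjugate of one twist by
   [u] in [H] can only be another twist if [u] lies in [H_phi].  Hence, with
   [r] running over representatives of the cosets [H_phi r] and [k] over
   [H_phi], the map [k r |-> (twist of phi by k)^r] is a bijection from [H]
   onto the class of [phi], and [Phi] is a disjoint union of copies of [H]. *)

Section GroupFacts.
Context {G : Group}.
Implicit Types a x y : G.

Lemma gmulrV x : gmul x (ginv x) = gone.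
Proof.
  transitivity (gmul (gmul (ginv (ginv x)) (ginv x)) (gmul x (ginv x))).
  { rewrite gmulV, gmul1. reflexivity. }
  rewrite <- gmulA, (gmulA _ (ginv x) x), gmulV, gmul1, gmulV. reflexivity.
Qed.

Lemma gmulr1 x : gmul x gone = x.
Proof. rewrite <- (gmulV G x), gmulA, gmulrV, gmul1. reflexivity. Qed.

Lemma gmulKV a x : gmul (gmul a (ginv x)) x = a.
Proof. rewrite <- gmulA, gmulV, gmulr1. reflexivity. Qed.

Lemma gmulK a x : gmul (gmul a x) (ginv x) = a.
Proof. rewrite <- gmulA, gmulrV, gmulr1. reflexivity. Qed.

Lemma ginv_unique x y : gmul x y = gone -> ginv x = y.
Proof. intro E. rewrite <- (gmul1 G y), <- (gmulV G x), <- gmulA, E, gmulr1. reflexivity. Qed.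

Lemma ginvM x y : ginv (gmul x y) = gmul (ginv y) (ginv x).
Proof. apply ginv_unique. rewrite gmulA, gmulK, gmulrV. reflexivity. Qed.

Lemma ginvK x : ginv (ginv x) = x.
Proof. apply ginv_unique, gmulV. Qed.

Lemma ginv1 : ginv (@gone G) = gone.
Proof. apply ginv_unique, gmul1. Qed.

Lemma gmulIl a x y : gmul a x = gmul a y -> x = y.
Proof. intro E. rewrite <- (gmul1 G x), <- (gmul1 G y), <- (gmulV G a), <- !gmulA, E. reflexivity. Qed.

Lemma gmulIr a x y : gmul x a = gmul y a -> x = y.
Proof. intro E. rewrite <- (gmulK x a), <- (gmulK y a), E. reflexivity. Qed.

Lemma gmul_swapV a x y : gmul a x = gmul y a -> gmul (ginv a) y = gmul x (ginv a).
Proof.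
  intro E. apply (gmulIl a). rewrite gmulA, gmulrV, gmul1, gmulA, E, gmulK. reflexivity.
Qed.

End GroupFacts.

Ltac gsimpl := repeat (rewrite ?ginvM, ?ginvK, ?ginv1, ?gmulA, ?gmulKV, ?gmulK,
   ?gmul1, ?gmulr1, ?gmulV, ?gmulrV).

Section Subgroups.
Context {G : Group} (K : G -> Prop) (K_subgroup : is_subgroup G K).

Lemma subgroup_conj x c : K x -> K c -> K (gmul x (gmul c (ginv x))).
Proof.
  destruct K_subgroup as (_ & K_mul & K_inv). intros Kx Kc.
  apply K_mul; [exact Kx | apply K_mul; [exact Kc | apply K_inv, Kx]].
Qed.

Definition coset_rep (x : G) : G := epsilon (inhabits gone) (fun r => K (gmul r (ginv x))).

Lemma coset_rep_spec x : K (gmul (coset_rep x) (ginv x)).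
Proof.
  unfold coset_rep. apply epsilon_spec. exists x. rewrite gmulrV. apply K_subgroup.
Qed.

Lemma coset_rep_eq x y : K (gmul x (ginv y)) -> coset_rep x = coset_rep y.
Proof.
  destruct K_subgroup as (_ & K_mul & K_inv). intro Kxy.
  unfold coset_rep. f_equal. apply functional_extensionality. intro r.
  apply propositional_extensionality. split; intro Kr.
  - replace (gmul r (ginv y)) with (gmul (gmul r (ginv x)) (gmul x (ginv y)))
      by (gsimpl; reflexivity).
    apply K_mul; assumption.
  - replace (gmul r (ginv x)) with (gmul (gmul r (ginv y)) (ginv (gmul x (ginv y))))
      by (gsimpl; reflexivity).
    apply K_mul; [assumption | apply K_inv; assumption].
Qed.

End Subgroups.

Arguments coset_rep {G} K x.

Lemma card_divides_of_equipotent_classes (A B : Type) (R : B -> B -> Prop) :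
  (forall b, R b b) -> (forall b c, R b c -> R c b) ->
  (forall b c d, R b c -> R c d -> R b d) ->
  (forall b, exists e : A -> B,
     (forall u v, e u = e v -> u = v) /\ (forall c, R b c <-> exists a, e a = c)) ->
  card_divides A B.
Proof.
  intros R_refl R_sym R_trans classes.
  pose (canon b := epsilon (inhabits b) (R b)).
  assert (canon_R : forall b, R b (canon b)).
  { intro b. apply epsilon_spec. exists b. apply R_refl. }
  assert (canon_eq : forall b c, R b c -> canon b = canon c).
  { intros b c Rbc. unfold canon.
    replace (R c) with (R b).
    - f_equal. apply proof_irrelevance.
    - apply functional_extensionality. intro x.
      apply propositional_extensionality. split; eauto. }
  pose (emb b := proj1_sig (constructive_indefinite_description _ (classes b))).
  assert (emb_spec : forall b, (forall u v, emb b u = emb b v -> u = v) /\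
                               (forall c, R b c <-> exists a, emb b a = c))
    by (intro b; exact (proj2_sig (constructive_indefinite_description _ (classes b)))).
  exists {b : B | canon b = b}, (fun p => emb (proj1_sig (snd p)) (fst p)). split.
  - intros [a [m Hm]] [a' [m' Hm']]. simpl. intro E.
    assert (Rmm' : R m m').
    { apply R_trans with (emb m a).
      - apply (proj2 (emb_spec m)). eauto.
      - rewrite E. apply R_sym, (proj2 (emb_spec m')). eauto. }
    assert (m = m') by (rewrite <- Hm, <- Hm'; apply canon_eq, Rmm').
    subst m'. assert (a = a') by exact (proj1 (emb_spec m) a a' E). subst a'.
    do 2 f_equal. apply proof_irrelevance.
  - intro b.
    destruct (proj1 (proj2 (emb_spec (canon b)) b) (R_sym _ _ (canon_R b))) as [a Ea].
    assert (fixed : canon (canon b) = canon b) by (symmetry; apply canon_eq, canon_R).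
    exists (a, exist (fun m => canon m = m) (canon b) fixed). exact Ea.
Qed.

Section Homomorphisms.
Context {F G : Group}.

Lemma hom1 (phi : F -> G) : is_hom F G phi -> phi gone = gone.
Proof. intro phi_hom. apply (gmulIl (phi gone)). rewrite <- phi_hom, gmul1, gmulr1. reflexivity. Qed.

Lemma homV (phi : F -> G) (x : F) : is_hom F G phi -> phi (ginv x) = ginv (phi x).
Proof. intro phi_hom. symmetry. apply ginv_unique. rewrite <- phi_hom, gmulrV. apply hom1, phi_hom. Qed.

Definition conjfun (h : G) (phi : F -> G) : F -> G := fun f => conj (phi f) h.

Lemma conjfun_hom h chi : is_hom F G chi -> is_hom F G (conjfun h chi).
Proof. intros chi_hom x y. unfold conjfun, conj. rewrite chi_hom. gsimpl. reflexivity. Qed.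

Lemma conjfun_comp a b chi : conjfun a (conjfun b chi) = conjfun (gmul b a) chi.
Proof. apply functional_extensionality. intro f. unfold conjfun, conj. gsimpl. reflexivity. Qed.

Lemma conjfun1 chi : conjfun gone chi = chi.
Proof. apply functional_extensionality. intro f. unfold conjfun, conj. gsimpl. reflexivity. Qed.

End Homomorphisms.

Section Powers.
Context {G : Group}.

Fixpoint npow (x : G) (n : nat) : G :=
  match n with O => gone | S k => gmul (npow x k) x end.

Definition zpow (x : G) (n : Z) : G :=
  if (0 <=? n)%Z then npow x (Z.to_nat n) else npow (ginv x) (Z.to_nat (- n)).

Lemma zpow0 x : zpow x 0 = gone.
Proof. reflexivity. Qed.

Lemma zpow1 x : zpow x 1 = x.
Proof. apply gmul1. Qed.

Lemma zpowN1 x : zpow x (-1) = ginv x.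
Proof. apply gmul1. Qed.

Lemma zpowS x n : zpow x (n + 1) = gmul (zpow x n) x.
Proof.
  unfold zpow. destruct (0 <=? n)%Z eqn:n_ge0.
  - apply Z.leb_le in n_ge0.
    replace (0 <=? n + 1)%Z with true by (symmetry; apply Z.leb_le; lia).
    rewrite Z2Nat.inj_add, Nat.add_comm by lia. reflexivity.
  - apply Z.leb_gt in n_ge0. destruct (Z.eq_dec n (-1)) as [->|n_neq].
    + simpl. rewrite gmul1, gmulV. reflexivity.
    + replace (0 <=? n + 1)%Z with false by (symmetry; apply Z.leb_gt; lia).
      replace (Z.to_nat (- n)) with (S (Z.to_nat (- (n + 1)))) by lia.
      simpl. rewrite gmulKV. reflexivity.
Qed.

Lemma zpowP x n : zpow x (n - 1) = gmul (zpow x n) (ginv x).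
Proof. replace n with ((n - 1) + 1)%Z at 2 by lia. rewrite zpowS, gmulK. reflexivity. Qed.

Lemma zpowD x m n : zpow x (m + n) = gmul (zpow x m) (zpow x n).
Proof.
  induction n using Z.peano_ind.
  - rewrite Z.add_0_r, zpow0, gmulr1. reflexivity.
  - rewrite <- !Z.add_1_r, Z.add_assoc, !zpowS, IHn, gmulA. reflexivity.
  - rewrite <- !Z.sub_1_r, Z.add_sub_assoc, !zpowP, IHn, gmulA. reflexivity.
Qed.

Lemma zpowN_mul x n : gmul (zpow x (- n)) (zpow x n) = gone.
Proof. rewrite <- zpowD, Z.add_opp_diag_l. reflexivity. Qed.

End Powers.

Section Degree.
Context {F : Group} {deg : F -> Z} (deg_is_degree : is_degree F deg).

Lemma degM x y : deg (gmul x y) = (deg x + deg y)%Z.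
Proof. apply deg_is_degree. Qed.

Lemma deg1 : deg gone = 0%Z.
Proof. pose proof (degM gone gone) as E. rewrite gmul1 in E. lia. Qed.

Lemma degV x : deg (ginv x) = (- deg x)%Z.
Proof. pose proof (degM (ginv x) x) as E. rewrite gmulV, deg1 in E. lia. Qed.

Lemma deg_zpow x n : deg (zpow x n) = (n * deg x)%Z.
Proof.
  induction n using Z.peano_ind.
  - rewrite zpow0, deg1. reflexivity.
  - rewrite <- Z.add_1_r, zpowS, degM, IHn. lia.
  - rewrite <- Z.sub_1_r, zpowP, degM, IHn, degV. lia.
Qed.

Context (f1 : F) (deg_f1 : deg f1 = 1%Z).

Lemma deg_ind (P : F -> Prop) :
  (forall f, deg f = 0%Z -> P f) ->
  (forall f, P f -> P (gmul f f1)) ->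
  (forall f, P f -> P (gmul f (ginv f1))) ->
  forall f, P f.
Proof.
  intros P0 P_succ P_pred.
  assert (P_deg : forall n f, deg f = n -> P f).
  { intro n. induction n using Z.peano_ind; intros f deg_f.
    - auto.
    - rewrite <- (gmulKV f f1). apply P_succ, IHn. rewrite degM, degV, deg_f1. lia.
    - rewrite <- (gmulK f f1). apply P_pred, IHn. rewrite degM, deg_f1. lia. }
  intro f. exact (P_deg _ f eq_refl).
Qed.

Lemma hom_eq_deg0 {G : Group} (chi psi : F -> G) :
  is_hom F G chi -> is_hom F G psi ->
  (forall f, deg f = 0%Z -> chi f = psi f) -> chi f1 = psi f1 -> chi = psi.
Proof.
  intros chi_hom psi_hom E0 E1. apply functional_extensionality.
  apply deg_ind.
  - exact E0.
  - intros f E. rewrite chi_hom, psi_hom, E, E1. reflexivity.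
  - intros f E. rewrite chi_hom, psi_hom, (homV chi), (homV psi), E, E1 by assumption.
    reflexivity.
Qed.

End Degree.

Section Twisting.
Variables (F G : Group) (deg : F -> Z) (H : G -> Prop) (f1 : F).
Hypothesis deg_is_degree : is_degree F deg.
Hypothesis deg_f1 : deg f1 = 1%Z.
Hypothesis H_subgroup : is_subgroup G H.

Local Notation core phi := (phi_core F G deg phi H).

Lemma core_sub phi c : is_hom F G phi -> core phi c -> H c.
Proof.
  intros phi_hom [c_conj _]. specialize (c_conj gone). unfold in_conj_sub in c_conj.
  rewrite hom1, ginv1, gmulr1, gmul1 in c_conj by assumption. exact c_conj.
Qed.

Lemma core_subgroup phi : is_subgroup G (core phi).
Proof.
  destruct H_subgroup as (H_one & H_mul & H_inv). split; [|split].
  - split.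
    + intro f. unfold in_conj_sub. gsimpl. exact H_one.
    + intros f _. gsimpl. reflexivity.
  - intros c d [c_conj c_comm] [d_conj d_comm]. split.
    + intro f. unfold in_conj_sub in *.
      replace (gmul (phi f) (gmul (gmul c d) (ginv (phi f))))
        with (gmul (gmul (phi f) (gmul c (ginv (phi f)))) (gmul (phi f) (gmul d (ginv (phi f)))))
        by (gsimpl; reflexivity).
      apply H_mul; auto.
    + intros f deg_f. rewrite <- gmulA, d_comm, gmulA, c_comm, gmulA by assumption.
      reflexivity.
  - intros c [c_conj c_comm]. split.
    + intro f. unfold in_conj_sub in *.
      replace (gmul (phi f) (gmul (ginv c) (ginv (phi f))))
        with (ginv (gmul (phi f) (gmul c (ginv (phi f))))) by (gsimpl; reflexivity).
      apply H_inv; auto.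
    + intros f deg_f. apply gmul_swapV, c_comm, deg_f.
Qed.

Lemma core_conj_image phi c f0 : is_hom F G phi -> core phi c ->
  core phi (gmul (phi f0) (gmul c (ginv (phi f0)))).
Proof.
  intros phi_hom [c_conj c_comm]. split.
  - intro f. unfold in_conj_sub in *. specialize (c_conj (gmul f f0)).
    rewrite phi_hom in c_conj. revert c_conj. gsimpl. auto.
  - intros k deg_k.
    assert (c_comm' := c_comm (gmul (ginv f0) (gmul k f0))).
    rewrite !phi_hom, homV, !degM, degV, deg_k in c_comm' by assumption.
    specialize (c_comm' ltac:(lia)).
    apply (gmulIl (ginv (phi f0))). apply (gmulIr (phi f0)).
    gsimpl. rewrite <- !gmulA in c_comm' |- *. gsimpl. rewrite <- !gmulA. exact c_comm'.
Qed.

Lemma core_conjfun chi c h : H h -> core chi c ->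
  core (conjfun h chi) (gmul (ginv h) (gmul c h)).
Proof.
  destruct H_subgroup as (_ & H_mul & H_inv). intros Hh [c_conj c_comm]. split.
  - intro f. unfold in_conj_sub, conjfun, conj in *.
    replace (gmul (gmul (ginv h) (gmul (chi f) h))
       (gmul (gmul (ginv h) (gmul c h)) (ginv (gmul (ginv h) (gmul (chi f) h)))))
     with (gmul (ginv h) (gmul (gmul (chi f) (gmul c (ginv (chi f)))) h)) by (gsimpl; reflexivity).
    apply H_mul; [apply H_inv, Hh | apply H_mul; [apply c_conj | exact Hh]].
  - intros f deg_f. unfold conjfun, conj. specialize (c_comm f deg_f).
    gsimpl. rewrite <- !gmulA, (gmulA _ c (chi f)), c_comm. gsimpl. reflexivity.
Qed.

Definition is_twist (phi : F -> G) (d : G) (chi : F -> G) : Prop :=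
  is_hom F G chi /\ (forall f, deg f = 0%Z -> chi f = phi f) /\ chi f1 = gmul (phi f1) d.

Definition twist (phi : F -> G) (d : G) : F -> G :=
  fun f => gmul (phi (gmul f (zpow f1 (- deg f)))) (zpow (gmul (phi f1) d) (deg f)).

Section TwistExistence.
Variables (phi : F -> G) (d : G).
Hypothesis phi_hom : is_hom F G phi.
Hypothesis d_comm : forall k, deg k = 0%Z -> gmul d (phi k) = gmul (phi k) d.

Local Notation a := (gmul (phi f1) d).

Lemma twist_gen_commute k : deg k = 0%Z ->
  gmul a (phi k) = gmul (phi (gmul f1 (gmul k (ginv f1)))) a.
Proof.
  intro deg_k. rewrite !phi_hom, homV by assumption. gsimpl.
  rewrite <- !gmulA, d_comm by assumption. reflexivity.
Qed.

Lemma twist_gen_zpow_commute n k : deg k = 0%Z ->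
  gmul (zpow a n) (phi k) = gmul (phi (gmul (zpow f1 n) (gmul k (zpow f1 (- n))))) (zpow a n).
Proof.
  revert k. induction n using Z.peano_ind; intros k deg_k.
  - simpl. rewrite !zpow0. gsimpl. reflexivity.
  - assert (deg_k' : deg (gmul f1 (gmul k (ginv f1))) = 0%Z)
      by (rewrite !degM, degV, deg_k by assumption; lia).
    rewrite <- Z.add_1_r. replace (- (n + 1))%Z with (-1 + - n)%Z by lia.
    rewrite !zpowD, !zpow1, zpowN1, <- gmulA, twist_gen_commute, gmulA, IHn by assumption.
    rewrite !phi_hom. gsimpl. reflexivity.
  - assert (deg_k' : deg (gmul (ginv f1) (gmul k f1)) = 0%Z)
      by (rewrite !degM, degV, deg_k by assumption; lia).
    assert (inv_commute : gmul (ginv a) (phi k) = gmul (phi (gmul (ginv f1) (gmul k f1))) (ginv a)).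
    { apply gmul_swapV. rewrite twist_gen_commute by assumption. gsimpl. reflexivity. }
    rewrite <- Z.sub_1_r. replace (- (n - 1))%Z with (1 + - n)%Z by lia.
    rewrite zpowP, zpowD, zpowP, !zpow1, <- gmulA, inv_commute, gmulA, IHn by assumption.
    rewrite !phi_hom. gsimpl. reflexivity.
Qed.

Lemma twist_hom : is_hom F G (twist phi d).
Proof.
  intros x y. unfold twist. rewrite degM by assumption.
  set (m := deg x). set (n := deg y).
  assert (deg_k : deg (gmul y (zpow f1 (- n))) = 0%Z)
    by (rewrite degM, deg_zpow, deg_f1 by assumption; unfold n; lia).
  rewrite <- (gmulA G (phi (gmul x (zpow f1 (- m))))), (gmulA G (zpow a m)),
    twist_gen_zpow_commute by exact deg_k.
  rewrite <- (gmulA G (phi _) (zpow a m) (zpow a n)), <- zpowD, gmulA, <- phi_hom.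
  replace (- (m + n))%Z with (- n + - m)%Z by lia.
  rewrite zpowD. gsimpl.
  rewrite <- (gmulA F x (zpow f1 (- m))), zpowN_mul, gmulr1. reflexivity.
Qed.

Lemma twist_is_twist : is_twist phi d (twist phi d).
Proof.
  split; [exact twist_hom | split].
  - intros f deg_f. unfold twist. rewrite deg_f. simpl. rewrite !zpow0, !gmulr1. reflexivity.
  - unfold twist. rewrite deg_f1, zpowN1, zpow1, gmulrV, hom1, gmul1 by assumption.
    reflexivity.
Qed.

End TwistExistence.

Lemma is_twist_unique phi d chi chi' : is_twist phi d chi -> is_twist phi d chi' -> chi = chi'.
Proof.
  intros (chi_hom & chi_deg0 & chi_f1) (chi'_hom & chi'_deg0 & chi'_f1).
  apply (hom_eq_deg0 deg_is_degree f1 deg_f1); try assumption.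
  - intros f deg_f. rewrite chi_deg0, chi'_deg0 by assumption. reflexivity.
  - rewrite chi_f1, chi'_f1. reflexivity.
Qed.

Lemma is_twist_refl phi : is_hom F G phi -> is_twist phi gone phi.
Proof. intro phi_hom. split; [exact phi_hom | split; [reflexivity | symmetry; apply gmulr1]]. Qed.

Lemma is_twist_trans phi d chi d' chi' :
  is_twist phi d chi -> is_twist chi d' chi' -> is_twist phi (gmul d d') chi'.
Proof.
  intros (_ & chi_deg0 & chi_f1) (chi'_hom & chi'_deg0 & chi'_f1).
  split; [exact chi'_hom | split].
  - intros f deg_f. rewrite chi'_deg0, chi_deg0 by assumption. reflexivity.
  - rewrite chi'_f1, chi_f1. gsimpl. reflexivity.
Qed.

Lemma is_twist_sym phi d chi : is_hom F G phi -> is_twist phi d chi -> is_twist chi (ginv d) phi.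
Proof.
  intros phi_hom (_ & chi_deg0 & chi_f1). split; [exact phi_hom | split].
  - intros f deg_f. rewrite chi_deg0 by assumption. reflexivity.
  - rewrite chi_f1. gsimpl. reflexivity.
Qed.

Lemma is_twist_conj chi d chi' h :
  is_twist chi d chi' -> is_twist (conjfun h chi) (gmul (ginv h) (gmul d h)) (conjfun h chi').
Proof.
  intros (chi'_hom & chi'_deg0 & chi'_f1). split; [apply conjfun_hom, chi'_hom | split].
  - intros f deg_f. unfold conjfun. rewrite chi'_deg0 by assumption. reflexivity.
  - unfold conjfun, conj. rewrite chi'_f1. gsimpl. reflexivity.
Qed.

(* [v] commutes with the degree-zero values of [phi], so conjugating by [v] is a twist. *)
Lemma conjfun_core_is_twist phi v : is_hom F G phi -> core phi v ->
  core phi (gmul (conj (ginv v) (phi f1)) v) /\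
  is_twist phi (gmul (conj (ginv v) (phi f1)) v) (conjfun v phi).
Proof.
  intros phi_hom v_core. split.
  - apply core_subgroup; [|exact v_core].
    replace (conj (ginv v) (phi f1))
      with (gmul (phi (ginv f1)) (gmul (ginv v) (ginv (phi (ginv f1)))))
      by (unfold conj; rewrite homV by assumption; gsimpl; reflexivity).
    apply core_conj_image; [assumption | apply core_subgroup, v_core].
  - split; [apply conjfun_hom, phi_hom | split].
    + intros f deg_f. unfold conjfun, conj.
      rewrite <- (proj2 v_core f deg_f). gsimpl. reflexivity.
    + unfold conjfun, conj. gsimpl. reflexivity.
Qed.

Section TwistCore.
Variables (phi chi : F -> G) (d : G).
Hypothesis phi_hom : is_hom F G phi.
Hypothesis d_core : core phi d.
Hypothesis chi_twist : is_twist phi d chi.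

Lemma twist_coset f : core phi (gmul (ginv (phi f)) (chi f)).
Proof.
  destruct chi_twist as (chi_hom & chi_deg0 & chi_f1).
  revert f. apply (deg_ind deg_is_degree f1 deg_f1).
  - intros f deg_f. cbv beta. rewrite chi_deg0, gmulV by assumption. apply core_subgroup.
  - intros f x_core. cbv beta. rewrite chi_hom, phi_hom, chi_f1.
    replace (gmul (ginv (gmul (phi f) (phi f1))) (gmul (chi f) (gmul (phi f1) d)))
      with (gmul (gmul (phi (ginv f1)) (gmul (gmul (ginv (phi f)) (chi f)) (ginv (phi (ginv f1))))) d)
      by (rewrite homV by assumption; gsimpl; reflexivity).
    apply core_subgroup; [apply core_conj_image|]; assumption.
  - intros f x_core. cbv beta. rewrite chi_hom, phi_hom, (homV phi), (homV chi), chi_f1 by assumption.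
    replace (gmul (ginv (gmul (phi f) (ginv (phi f1)))) (gmul (chi f) (ginv (gmul (phi f1) d))))
      with (gmul (phi f1) (gmul (gmul (gmul (ginv (phi f)) (chi f)) (ginv d)) (ginv (phi f1))))
      by (gsimpl; reflexivity).
    apply core_conj_image; [assumption|].
    apply core_subgroup; [assumption | apply core_subgroup, d_core].
Qed.

Lemma core_sub_twist c : core phi c -> core chi c.
Proof.
  intro c_core. split.
  - intro f. unfold in_conj_sub.
    pose (x := gmul (ginv (phi f)) (chi f)).
    replace (gmul (chi f) (gmul c (ginv (chi f))))
      with (gmul (phi f) (gmul (gmul x (gmul c (ginv x))) (ginv (phi f))))
      by (unfold x; gsimpl; reflexivity).
    apply (core_sub phi); [assumption|].
    apply core_conj_image; [assumption|].
    apply subgroup_conj; [apply core_subgroup | apply twist_coset | exact c_core].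
  - intros f deg_f. rewrite (proj1 (proj2 chi_twist)) by assumption.
    apply c_core, deg_f.
Qed.

End TwistCore.

Lemma core_twist phi d chi : is_hom F G phi -> core phi d -> is_twist phi d chi ->
  forall c, core chi c <-> core phi c.
Proof.
  intros phi_hom d_core chi_twist c. split.
  - apply (core_sub_twist chi phi (ginv d)).
    + apply chi_twist.
    + apply (core_sub_twist phi chi d); try assumption. apply core_subgroup, d_core.
    + apply is_twist_sym; assumption.
  - apply (core_sub_twist phi chi d); assumption.
Qed.

(* Comparing [chi f] and [chi' f] through the cosets [phi f * H_phi] shows that
   [u] is conjugated into [H] by every [phi f]. *)
Lemma conj_twist_core phi d chi d' chi' u : is_hom F G phi ->
  core phi d -> is_twist phi d chi -> core phi d' -> is_twist phi d' chi' ->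
  chi = conjfun u chi' -> H u -> core phi u.
Proof.
  destruct H_subgroup as (_ & H_mul & H_inv).
  intros phi_hom d_core chi_twist d'_core chi'_twist E Hu. split.
  - assert (conj_inv : forall g, H (gmul (ginv (phi g)) (gmul u (phi g)))).
    { intro g. assert (Eg : chi g = conj (chi' g) u) by (rewrite E; reflexivity).
      replace (gmul (ginv (phi g)) (gmul u (phi g)))
        with (gmul (gmul (ginv (phi g)) (chi' g)) (gmul u (ginv (gmul (ginv (phi g)) (chi g)))))
        by (rewrite Eg; unfold conj; gsimpl; reflexivity).
      apply H_mul; [|apply H_mul; [exact Hu | apply H_inv]]; apply (core_sub phi _ phi_hom).
      - exact (twist_coset phi chi' d' phi_hom d'_core chi'_twist g).
      - exact (twist_coset phi chi d phi_hom d_core chi_twist g). }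
    intro f. unfold in_conj_sub. specialize (conj_inv (ginv f)).
    rewrite homV, ginvK in conj_inv by assumption. exact conj_inv.
  - intros f deg_f.
    assert (E0 : chi f = conjfun u chi' f) by (rewrite E; reflexivity).
    unfold conjfun, conj in E0.
    rewrite (proj1 (proj2 chi_twist)), (proj1 (proj2 chi'_twist)) in E0 by assumption.
    rewrite E0 at 1. gsimpl. reflexivity.
Qed.

Definition linked (phi psi : F -> G) : Prop :=
  exists h d chi, H h /\ core phi d /\ is_twist phi d chi /\ psi = conjfun h chi.

Lemma linked_refl phi : is_hom F G phi -> linked phi phi.
Proof.
  intro phi_hom. exists gone, gone, phi.
  split; [apply H_subgroup | split; [apply core_subgroup | split]].
  - apply is_twist_refl, phi_hom.
  - symmetry. apply conjfun1.
Qed.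

Lemma linked_sym phi psi : is_hom F G phi -> linked phi psi -> linked psi phi.
Proof.
  intros phi_hom (h & d & chi & Hh & d_core & chi_twist & ->).
  exists (ginv h), (gmul (ginv h) (gmul (ginv d) h)), (conjfun h phi).
  split; [apply H_subgroup, Hh | split; [|split]].
  - apply core_conjfun; [exact Hh|].
    apply (core_twist phi d chi); try assumption. apply core_subgroup, d_core.
  - apply is_twist_conj, is_twist_sym; assumption.
  - rewrite conjfun_comp, gmulrV, conjfun1. reflexivity.
Qed.

Lemma linked_trans phi psi rho : is_hom F G phi ->
  linked phi psi -> linked psi rho -> linked phi rho.
Proof.
  intros phi_hom (h & d & chi & Hh & d_core & chi_twist & ->)
    (h' & d' & chi' & Hh' & d'_core & chi'_twist & ->).
  assert (back : conjfun (ginv h) (conjfun h chi) = chi)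
    by (rewrite conjfun_comp, gmulrV; apply conjfun1).
  pose (e := gmul (ginv (ginv h)) (gmul d' (ginv h))).
  assert (e_twist : is_twist chi e (conjfun (ginv h) chi')).
  { rewrite <- back at 1. apply is_twist_conj, chi'_twist. }
  assert (e_core : core phi e).
  { apply (core_twist phi d chi); try assumption.
    rewrite <- back. apply core_conjfun; [apply H_subgroup, Hh | exact d'_core]. }
  exists (gmul h h'), (gmul d e), (conjfun (ginv h) chi').
  split; [apply H_subgroup; assumption | split; [apply core_subgroup; assumption | split]].
  - apply is_twist_trans with chi; assumption.
  - rewrite conjfun_comp. f_equal. gsimpl. reflexivity.
Qed.

Definition orbit_map (m : F -> G) (h : G) : F -> G :=
  conjfun (coset_rep (core m) h) (twist m (gmul h (ginv (coset_rep (core m) h)))).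

Lemma orbit_shift_core m h : core m (gmul h (ginv (coset_rep (core m) h))).
Proof.
  replace (gmul h (ginv (coset_rep (core m) h)))
    with (ginv (gmul (coset_rep (core m) h) (ginv h))) by (gsimpl; reflexivity).
  apply core_subgroup, coset_rep_spec, core_subgroup.
Qed.

Lemma coset_rep_core_mem m h : is_hom F G m -> H h -> H (coset_rep (core m) h).
Proof.
  intros m_hom Hh.
  replace (coset_rep (core m) h) with (gmul (gmul (coset_rep (core m) h) (ginv h)) h)
    by (gsimpl; reflexivity).
  apply H_subgroup; [|exact Hh]. apply (core_sub m _ m_hom), coset_rep_spec, core_subgroup.
Qed.

Lemma orbit_map_linked m h : is_hom F G m -> H h -> linked m (orbit_map m h).
Proof.
  intros m_hom Hh.
  exists (coset_rep (core m) h), (gmul h (ginv (coset_rep (core m) h))),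
    (twist m (gmul h (ginv (coset_rep (core m) h)))).
  split; [apply coset_rep_core_mem; assumption | split; [apply orbit_shift_core | split]].
  - apply twist_is_twist; [exact m_hom | apply orbit_shift_core].
  - reflexivity.
Qed.

Lemma orbit_map_inj m h h' : is_hom F G m -> H h -> H h' ->
  orbit_map m h = orbit_map m h' -> h = h'.
Proof.
  intros m_hom Hh Hh' E. unfold orbit_map in E.
  pose proof (orbit_shift_core m h) as k_core.
  pose proof (orbit_shift_core m h') as k'_core.
  pose proof (coset_rep_core_mem m h m_hom Hh) as Hr.
  pose proof (coset_rep_core_mem m h' m_hom Hh') as Hr'.
  set (r := coset_rep (core m) h) in *. set (r' := coset_rep (core m) h') in *.
  set (k := gmul h (ginv r)) in *. set (k' := gmul h' (ginv r')) in *.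
  pose proof (twist_is_twist m k m_hom (proj2 k_core)) as k_twist.
  pose proof (twist_is_twist m k' m_hom (proj2 k'_core)) as k'_twist.
  assert (E2 : twist m k = conjfun (gmul r' (ginv r)) (twist m k')).
  { rewrite <- conjfun_comp, <- E, conjfun_comp, gmulrV, conjfun1. reflexivity. }
  assert (u_core : core m (gmul r' (ginv r))).
  { apply (conj_twist_core m k (twist m k) k' (twist m k')); try assumption.
    apply H_subgroup; [assumption | apply H_subgroup; assumption]. }
  assert (Err : r = r').
  { unfold r, r'. apply coset_rep_eq; [apply core_subgroup|].
    replace (gmul h (ginv h')) with (gmul k (gmul (ginv (gmul r' (ginv r))) (ginv k')))
      by (unfold k, k'; gsimpl; reflexivity).
    apply core_subgroup; [assumption|].
    apply core_subgroup; apply core_subgroup; assumption. }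
  rewrite <- Err, gmulrV, conjfun1 in E2.
  assert (E3 := f_equal (fun chi => chi f1) E2). cbv beta in E3.
  rewrite (proj2 (proj2 k_twist)), (proj2 (proj2 k'_twist)) in E3.
  apply gmulIl in E3. unfold k, k' in E3. rewrite <- Err in E3. exact (gmulIr _ _ _ E3).
Qed.

Lemma orbit_map_surj m psi : is_hom F G m -> linked m psi ->
  exists h, H h /\ orbit_map m h = psi.
Proof.
  intros m_hom (h & d & chi & Hh & d_core & chi_twist & ->).
  set (r := coset_rep (core m) h).
  set (v := gmul h (ginv r)).
  assert (v_core : core m v) by apply orbit_shift_core.
  destruct (conjfun_core_is_twist m v m_hom v_core) as [e_core e_twist].
  set (d2 := gmul (gmul (conj (ginv v) (m f1)) v) (gmul (ginv v) (gmul d v))).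
  assert (d2_twist : is_twist m d2 (conjfun v chi)).
  { apply is_twist_trans with (conjfun v m); [exact e_twist | apply is_twist_conj, chi_twist]. }
  assert (d2_core : core m d2).
  { apply core_subgroup; [exact e_core|].
    replace (gmul (ginv v) (gmul d v)) with (gmul (ginv v) (gmul d (ginv (ginv v))))
      by (rewrite ginvK; reflexivity).
    apply subgroup_conj; [apply core_subgroup | apply core_subgroup, v_core | exact d_core]. }
  exists (gmul d2 r). split.
  - apply H_subgroup; [apply (core_sub m); assumption | apply coset_rep_core_mem; assumption].
  - assert (rep_eq : coset_rep (core m) (gmul d2 r) = r).
    { apply coset_rep_eq; [apply core_subgroup|].
      replace (gmul (gmul d2 r) (ginv h)) with (gmul d2 (ginv v)) by (unfold v; gsimpl; reflexivity).
      apply core_subgroup; [exact d2_core | apply core_subgroup, v_core]. }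
    unfold orbit_map. rewrite rep_eq, gmulK.
    replace (conjfun h chi) with (conjfun r (conjfun v chi))
      by (rewrite conjfun_comp; unfold v; gsimpl; reflexivity).
    f_equal. apply (is_twist_unique m d2); [|exact d2_twist].
    apply twist_is_twist; [exact m_hom | apply d2_core].
Qed.

Section Counting.
Variable Phi : (F -> G) -> Prop.
Hypothesis Phi_hom : forall phi, Phi phi -> is_hom F G phi.
Hypothesis Phi_conj : forall h phi, H h -> Phi phi -> Phi (conjfun h phi).
Hypothesis Phi_twist : forall phi d chi, Phi phi -> core phi d -> is_twist phi d chi -> Phi chi.

Lemma linked_Phi phi psi : Phi phi -> linked phi psi -> Phi psi.
Proof.
  intros Pphi (h & d & chi & Hh & d_core & chi_twist & ->).
  apply Phi_conj; [exact Hh|]. apply (Phi_twist phi d); assumption.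
Qed.

Lemma card_divides_of_twist_closed : card_divides {h : G | H h} {phi : F -> G | Phi phi}.
Proof.
  apply (card_divides_of_equipotent_classes _ _
    (fun phi psi => linked (proj1_sig phi) (proj1_sig psi))).
  - intros [phi Pphi]. apply linked_refl, Phi_hom, Pphi.
  - intros [phi Pphi] [psi Ppsi]. apply linked_sym, Phi_hom, Pphi.
  - intros [phi Pphi] [psi Ppsi] [rho Prho]. apply linked_trans, Phi_hom, Pphi.
  - intros [m Pm].
    pose (orbit (h : {h : G | H h}) := exist Phi (orbit_map m (proj1_sig h))
      (linked_Phi m _ Pm (orbit_map_linked m _ (Phi_hom m Pm) (proj2_sig h)))).
    exists orbit. split.
    + intros [h Hh] [h' Hh'] E. apply (f_equal (@proj1_sig _ _)) in E. simpl in E.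
      apply orbit_map_inj in E; [|apply Phi_hom, Pm | exact Hh | exact Hh'].
      subst h'. f_equal. apply proof_irrelevance.
    + intros [psi Ppsi]. simpl. split.
      * intro m_psi. destruct (orbit_map_surj m psi (Phi_hom m Pm) m_psi) as [h [Hh Eh]].
        exists (exist _ h Hh). unfold orbit. simpl. subst psi. f_equal. apply proof_irrelevance.
      * intros [[h Hh] Eh]. apply (f_equal (@proj1_sig _ _)) in Eh. simpl in Eh. subst psi.
        apply orbit_map_linked; [apply Phi_hom, Pm | exact Hh].
Qed.

End Counting.

End Twisting.

Theorem mainTheorem1 (F G : Group) (deg : F -> Z) (H : G -> Prop)
  (Phi : (F -> G) -> Prop) :
  is_degree F deg ->
  is_subgroup G H ->
  (forall phi, Phi phi -> is_hom F G phi) ->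
  (* (I) invariance under conjugation by elements of H *)
  (forall (h : G) (phi : F -> G), H h -> Phi phi ->
     Phi (fun f => conj (phi f) h)) ->
  (* (II) *)
  (forall (phi psi : F -> G) (h : G) (f1 : F),
     Phi phi -> phi_core F G deg phi H h ->
     is_hom F G psi ->
     (forall f, deg f = 0%Z -> psi f = phi f) ->
     deg f1 = 1%Z -> psi f1 = gmul (phi f1) h ->
     Phi psi) ->
  card_divides {h : G | H h} {phi : F -> G | Phi phi}.
Proof.
  intros deg_is_degree H_subgroup Phi_hom Phi_conj Phi_twist.
  destruct (proj2 deg_is_degree 1%Z) as [f1 deg_f1].
  apply (card_divides_of_twist_closed F G deg H f1 deg_is_degree deg_f1 H_subgroup
           Phi Phi_hom Phi_conj).
  intros phi d chi Pphi d_core (chi_hom & chi_deg0 & chi_f1).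
  exact (Phi_twist phi chi d f1 Pphi d_core chi_hom chi_deg0 deg_f1 chi_f1).
Qed.
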